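(* Let $C$ be a coalgebra over a field $K$, and write the right socle of $C$ as $s(C^C)=\bigoplus_{j\in J}T_j$ with $T_j$ simple right subcomodules, and $C=\bigoplus_{j\in J}E(T_j)$ as right $C$-comodules, where $E(T_j)\subseteq C$ is an injective envelope of $T_j$. Let $J_0=\{j\in J\mid \mathrm{Rat}(E(T_j)^* )\neq 0\}$. If $C\cong\mathrm{Rat}(C^*_{C^*})$ as right $C^*$-modules, then ${}^{C}C\cong \mathrm{Rat}\big(\prod_{j\in J_0}E(T_j)^*\big)$, i.e. $C$ is isomorphic as a right $C^*$-module (left $C$-comodule) to the rational part of the right $C^*$-module $\prod_{j\in J_0}E(T_j)^*$.
   Context: $C^*$ is the dual algebra with convolution. $C$ is a right $C^*$-module via $c\cdot c^*=c^*(c_1)c_2$ (equivalently a left $C$-comodule, denoted ${}^CC$); $C^C$ denotes $C$ as a right comodule. A right comodule $M$ is a left $C^*$-module via $c^*\cdot m=m_0c^*(m_1)$ and $M^*$ is a right $C^*$-module via $(\alpha\cdot c^* )(m)=\alpha(c^*\cdot m)$. For a right $C^*$-module $N$, $\mathrm{Rat}(N)$ is the largest submodule whose action comes from a left $C$-comodule structure ($n\cdot c^*=c^*(n_{-1})n_0$). *)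

From HB Require Import structures.
From mathcomp Require Import all_boot all_order all_algebra.
From mathcomp Require Import boolp classical_sets functions.
From Stdlib Require List.
Set Implicit Arguments. Unset Strict Implicit. Unset Printing Implicit Defensive.
Import GRing.Theory.
Local Open Scope ring_scope.
Local Open Scope classical_set_scope.

Definition lin_fun (K : fieldType) (V : lmodType K) (f : V -> K) :=
  forall (a : K) (x y : V), f (a *: x + y) = a * f x + f y.

Definition lin_on (K : fieldType) (V : lmodType K) (E : set V) (f : V -> K) :=
  forall (a : K) (x y : V), E x -> E y -> f (a *: x + y) = a * f x + f y.

(* There is no tensor product of (infinite-dimensional) vector spaces  *)
(* in the library; the comultiplication  Delta c = sum c_1 (x) c_2  is  *)
(* given by a chosen finite representative  delta c : seq (V * V), and *)
(* all identities in V (x) V, V (x) V (x) V are stated after applying   *)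
(* arbitrary elementary tensors f (x) g (x) h of linear functionals,    *)
(* which separate points of tensor products over a field.              *)

Record coalg (K : fieldType) (V : lmodType K) := Coalg {
  delta : V -> seq (V * V);
  eps : V -> K;
  eps_lin : lin_fun eps;
  delta_lin : forall f g : V -> K, lin_fun f -> lin_fun g ->
     lin_fun (fun c => \sum_(p <- delta c) f p.1 * g p.2);
  delta_coassoc : forall (f g h : V -> K), lin_fun f -> lin_fun g -> lin_fun h ->
     forall c,
     \sum_(p <- delta c) (\sum_(q <- delta p.1) f q.1 * g q.2) * h p.2
     = \sum_(p <- delta c) f p.1 * (\sum_(q <- delta p.2) g q.1 * h q.2);
  counit_l : forall c, \sum_(p <- delta c) eps p.1 *: p.2 = c;
  counit_r : forall c, \sum_(p <- delta c) eps p.2 *: p.1 = c }.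

Section CoalgDefs.
Variables (K : fieldType) (V : lmodType K) (C : coalg V).

(* left C^*-action on C^C :  c^* . c = c_1 c^*(c_2) *)
Definition lact (cs : V -> K) (c : V) : V :=
  \sum_(p <- delta C c) cs p.2 *: p.1.

(* right C^*-action on C (i.e. on the left comodule ^C C): c . c^* = c^*(c_1) c_2 *)
Definition ract (c : V) (cs : V -> K) : V :=
  \sum_(p <- delta C c) cs p.1 *: p.2.

Definition conv (f g : V -> K) : V -> K :=
  fun c => \sum_(p <- delta C c) f p.1 * g p.2.

Definition subspace (D : set V) :=
  D 0 /\ forall (a : K) x y, D x -> D y -> D (a *: x + y).

(* right subcomodule  D <= C^C :  Delta(D) <= D (x) C, i.e. Delta(d) is
   killed by f (x) g whenever f vanishes on D *)
Definition subcomod (D : set V) :=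
  subspace D /\
  forall (f g : V -> K), lin_fun f -> lin_fun g -> (forall d, D d -> f d = 0) ->
  forall d, D d -> \sum_(p <- delta C d) f p.1 * g p.2 = 0.

Definition zero_set (D : set V) := forall x, D x -> x = 0.

Definition simple_subcomod (T : set V) :=
  subcomod T /\ ~ zero_set T /\
  forall D, subcomod D -> D `<=` T -> zero_set D \/ (forall x, T x -> D x).

Definition fsums (I : Type) (F : I -> set V) : set V :=
  [set x | exists s : seq (I * V),
     (forall p, List.In p s -> F p.1 p.2) /\ x = \sum_(p <- s) p.2].

Definition independent (I : Type) (F : I -> set V) :=
  forall s : seq (I * V), List.NoDup (map fst s) ->
    (forall p, List.In p s -> F p.1 p.2) ->
    \sum_(p <- s) p.2 = 0 -> forall p, List.In p s -> p.2 = 0.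

Definition is_dsum (I : Type) (F : I -> set V) (S : set V) :=
  independent F /\ forall x, S x <-> fsums F x.

Definition socle : set V :=
  fsums (fun T : {T : set V | simple_subcomod T} => proj1_sig T).

(* injective subcomodule of C^C (a subcomodule of the
   injective comodule C^C is injective iff it is a direct summand) *)
Definition inj_subcomod (E : set V) :=
  subcomod E /\ exists D, subcomod D /\
     independent (fun b : bool => if b then E else D) /\
     forall x, fsums (fun b : bool => if b then E else D) x.

(* E <= C is an injective envelope of T: T <= E essential, E injective *)
Definition inj_envelope (T E : set V) :=
  inj_subcomod E /\ T `<=` E /\
  forall D, subcomod D -> D `<=` E -> ~ zero_set D -> ~ zero_set (D `&` T).

(* A right C^*-module is given inside an ambient K-vector space N by   *)
(* a subspace M and an action act : N -> C^* -> N (relevant on M).     *)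

Section RatDef.
Variables (N : lmodType K) (M : set N) (act : N -> (V -> K) -> N).

Definition submod (P : set N) :=
  P `<=` M /\ P 0 /\ (forall (a : K) x y, P x -> P y -> P (a *: x + y)) /\
  forall x cs, lin_fun cs -> P x -> P (act x cs).

(* the action on P comes from a left C-comodule structure:
   n . c^* = c^*(n_{-1}) n_0 *)
Definition rational (P : set N) :=
  forall n, P n -> exists s : seq (V * N),
    (forall p, List.In p s -> P p.2) /\
    forall cs, lin_fun cs -> act n cs = \sum_(p <- s) cs p.1 *: p.2.

(* Rat(M): the largest rational submodule = sum (union) of rational submodules *)
Definition Rat : set N :=
  [set n | exists P, submod P /\ rational P /\ P n].

Definition iso_to_Rat :=
  exists phi : V -> N,
    (forall (a : K) x y, phi (a *: x + y) = a *: phi x + phi y) /\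
    injective phi /\
    (forall n, Rat n <-> exists c, phi c = n) /\
    forall c cs, lin_fun cs -> phi (ract c cs) = act (phi c) cs.

End RatDef.

Definition dualC : set (V -> K^o) := [set f | lin_fun f].
Definition dualC_act (f : V -> K^o) (cs : V -> K) : V -> K^o := conv f cs.

(* E^* for a subcomodule E <= C: a functional on E is represented by the
   unique function V -> K that is linear on E and vanishes off E. *)
Definition dualE (E : set V) : set (V -> K^o) :=
  [set f | lin_on E f /\ forall x, ~ E x -> f x = 0].
Definition dualE_act (E : set V) (f : V -> K^o) (cs : V -> K) : V -> K^o :=
  fun x => if `[< E x >] then f (lact cs x) else 0.

Definition J0 (J : Type) (E : J -> set V) : set J :=
  [set j | exists f, Rat (dualE (E j)) (dualE_act (E j)) f /\ f <> 0].

(* prod_{j in J0} E_j^* , represented inside J -> (V -> K) with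
   zero components outside J0; action componentwise. *)
Definition prodDual (J : Type) (E : J -> set V) : set (J -> V -> K^o) :=
  [set a | forall j, (J0 E j -> dualE (E j) (a j)) /\ (~ J0 E j -> a j = 0)].
Definition prodDual_act (J : Type) (E : J -> set V)
  (a : J -> V -> K^o) (cs : V -> K) : J -> V -> K^o :=
  fun j => dualE_act (E j) (a j) cs.

End CoalgDefs.

(* An isomorphism psi : C -> Rat(C^* ) of right C^*-modules turns c into a functional
   on C = (+)_j E_j; send c to the family of its restrictions to the E_j.  Restriction
   to a subcomodule is C^*-linear, so each restriction lies in Rat(E_j^* ) and hence
   vanishes unless j is in J0; as the E_j span C, the map is injective.  Conversely, a
   family of functionals on the E_j glues to a functional on C, gluing is again
   C^*-linear, so a rational family glues into Rat(C^* ) = psi(C), and its preimage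
   restricts back to the family. *)

From Pilot Require Import Defs.
From HB Require Import structures.
From mathcomp Require Import all_boot all_order all_algebra.
From mathcomp Require Import boolp classical_sets functions.
Set Implicit Arguments. Unset Strict Implicit. Unset Printing Implicit Defensive.
Import GRing.Theory.
Local Open Scope ring_scope.
Local Open Scope classical_set_scope.

Lemma InP (T : eqType) (x : T) (s : seq T) : reflect (List.In x s) (x \in s).
Proof.
elim: s => [|y s IH]; first by constructor.
rewrite inE; apply: (iffP orP) => [[/eqP->|/IH]|[->|/IH]] /=; by [left | right].
Qed.

Lemma uniq_NoDup (T : eqType) (s : seq T) : uniq s -> List.NoDup s.
Proof.
elim: s => [|x s IH] /=; first by constructor.
by case/andP=> /InP xs /IH; constructor.
Qed.

Lemma big_undup_fst (I T : eqType) (R : nmodType) (s : seq (I * T))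
    (G : I -> T -> R) :
  \sum_(p <- s) G p.1 p.2 =
  \sum_(i <- undup (map fst s)) \sum_(p <- s | p.1 == i) G i p.2.
Proof.
under [RHS]eq_bigr do rewrite big_mkcond.
rewrite exchange_big /=; apply: eq_big_seq => p ps.
rewrite -big_mkcond -big_filter /=.
have -> : [seq i <- undup (map fst s) | p.1 == i] = [:: p.1].
  rewrite (@eq_filter _ _ (pred1 p.1)) => [|i]; last by rewrite /= eq_sym.
  by rewrite filter_pred1_uniq ?undup_uniq // mem_undup map_f.
by rewrite big_seq1.
Qed.

Lemma eq_big_In (R : nmodType) (I : Type) (s : seq I) (F G : I -> R) :
  (forall i, List.In i s -> F i = G i) -> \sum_(i <- s) F i = \sum_(i <- s) G i.
Proof.
elim: s => [|i s IH] FG; first by rewrite !big_nil.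
by rewrite !big_cons FG ?IH //= => [j sj|]; [apply: FG; right | left].
Qed.

Section LinearFunctionals.
Variables (K : fieldType) (W : lmodType K).
Implicit Types (E A B : set W) (f : W -> K).

(* [lin_fun f] is [scalar f], so [f] packs into a [{linear W -> K | *%R}]. *)
Lemma lin_fun_sum f (I : Type) (r : seq I) (F : I -> W) : lin_fun f ->
  f (\sum_(i <- r) F i) = \sum_(i <- r) f (F i).
Proof.
move=> lf; exact: (linear_sum (HB.pack f (GRing.isLinear.Build _ _ _ _ f lf))).
Qed.

Lemma lin_funZ f a x : lin_fun f -> f (a *: x) = a * f x.
Proof.
move=> lf; exact: (linearZ_LR (HB.pack f (GRing.isLinear.Build _ _ _ _ f lf))).
Qed.

Lemma lin_funB f x y : lin_fun f -> f (x - y) = f x - f y.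
Proof.
move=> lf; exact: (raddfB (HB.pack f (GRing.isLinear.Build _ _ _ _ f lf))).
Qed.

Lemma subspaceZ E a x : subspace E -> E x -> E (a *: x).
Proof. by move=> [E0 Ecl] Ex; rewrite -[_ *: _]addr0; apply: Ecl. Qed.

Lemma subspace_sum E (I : Type) (r : seq I) (P : pred I) (F : I -> W) :
  subspace E -> (forall i, P i -> E (F i)) -> E (\sum_(i <- r | P i) F i).
Proof.
move=> [E0 Ecl] EF; apply: big_ind => // x y Ex Ey.
by rewrite -[x]scale1r; apply: Ecl.
Qed.

Lemma lin_on0 E f : subspace E -> lin_on E f -> f 0 = 0.
Proof.
move=> [E0 _] lf; have := lf 1 0 0 E0 E0; rewrite scaler0 addr0 mul1r => f0.
by apply: (@addrI _ (f 0)); rewrite addr0 -f0.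
Qed.

Lemma lin_onZ E f a x : subspace E -> lin_on E f -> E x -> f (a *: x) = a * f x.
Proof.
move=> sE lf Ex; have [E0 _] := sE.
by rewrite -[a *: x]addr0 lf // (lin_on0 sE lf) addr0.
Qed.

Lemma lin_on_sum E f (I : Type) (r : seq I) (P : pred I) (F : I -> W) :
  subspace E -> lin_on E f -> (forall i, P i -> E (F i)) ->
  f (\sum_(i <- r | P i) F i) = \sum_(i <- r | P i) f (F i).
Proof.
move=> sE lf EF; elim: r => [|i r IH]; first by rewrite !big_nil (lin_on0 sE lf).
rewrite !big_cons; case: ifP => // Pi.
have [EFi EFr] := (EF i Pi, subspace_sum r sE EF).
by rewrite -[in LHS](scale1r (F i)) lf ?mul1r ?IH.
Qed.

Lemma maximal_subspace_avoiding E y : subspace E -> ~ E y ->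
  exists A, [/\ subspace A, E `<=` A, ~ A y &
    forall B, subspace B -> A `<=` B -> ~ B y -> B `<=` A].
Proof.
move=> sE Ey; have [E0 _] := sE.
(* The alternative [D = set0] makes the union of the empty chain admissible. *)
pose P D := ~ D y /\ (D = set0 \/ subspace D /\ E `<=` D).
have [A [[Ay [A0|[sA EA]]] Amax]] : exists A, P A /\ forall B, A `<` B -> ~ P B.
- apply: Zorn_bigcup => F FP Ftot; split; first by move=> [X /FP[]].
  have [[X FX EX]|noE] := pselect (exists2 X, F X & E `<=` X); last first.
    left; apply/seteqP; split=> [x [X FX Xx]|//].
    have [_ [X0|[_ EX]]] := FP X FX; first by rewrite X0 in Xx.
    by case: noE; exists X.
  have sF Y : F Y -> forall x, Y x -> subspace Y.
    move=> FY x Yx; have [_ [Y0|[]//]] := FP Y FY.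
    by rewrite Y0 in Yx.
  right; split; last by move=> x /EX Xx; exists X.
  split; first by exists X => //; exact: EX.
  move=> a x z [X1 FX1 x1] [X2 FX2 x2].
  have [/(_ x x1) x2'|/(_ z x2) x1'] := Ftot X1 X2 FX1 FX2.
  + by exists X2 => //; have [_] := sF X2 FX2 z x2; apply.
  + by exists X1 => //; have [_] := sF X1 FX1 x x1; apply.
- exfalso; apply: (Amax E); last by split=> //; right; split.
  by rewrite A0; split=> // /(_ 0 E0).
exists A; split=> // B sB AB By x Bx; apply: contrapT => Ax.
by apply: (Amax B); [split=> // /(_ x Bx) | split=> //; right; split=> // ? /EA/AB].
Qed.

Lemma maximal_avoiding_add_line A y : subspace A -> ~ A y ->
  (forall B, subspace B -> A `<=` B -> ~ B y -> B `<=` A) ->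
  forall w, exists a d, A d /\ w = d + a *: y.
Proof.
move=> [A0 Acl] Ay Amax w; apply: contrapT => nw.
pose B u := exists d b, A d /\ u = d + b *: w.
have AB : A `<=` B by move=> d Ad; exists d, 0; rewrite scale0r addr0.
have sB : subspace B.
  split; first exact: AB.
  move=> a _ _ [d1 [b1 [A1 ->]]] [d2 [b2 [A2 ->]]].
  exists (a *: d1 + d2), (a * b1 + b2); split; first exact: (Acl).
  by rewrite scalerDr scalerA scalerDl addrACA.
have By : ~ B y.
  move=> [d [b [Ad yE]]]; have [b0|bn0] := eqVneq b 0.
    by apply: Ay; rewrite yE b0 scale0r addr0.
  apply: nw; exists b^-1, ((- b^-1) *: d + 0); split; first exact: (Acl).
  by rewrite yE addr0 scalerDr scalerA mulVf // scale1r scaleNr addKr.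
apply: nw; exists 0, w; rewrite scale0r addr0; split=> //.
by apply: (Amax B) => //; exists 0, 1; rewrite add0r scale1r.
Qed.

Lemma separating_functional E y : subspace E -> ~ E y ->
  exists f, [/\ lin_fun f, forall x, E x -> f x = 0 & f y = 1].
Proof.
move=> sE Ey; have [A [sA EA Ay Amax]] := maximal_subspace_avoiding sE Ey.
have [A0 Acl] := sA.
have dec := maximal_avoiding_add_line sA Ay Amax.
have coef_uniq a1 a2 d1 d2 : A d1 -> A d2 -> d1 + a1 *: y = d2 + a2 *: y -> a1 = a2.
  move=> A1 A2 e; apply: contrapT => /eqP; rewrite -subr_eq0 => na; apply: Ay.
  have -> : y = (a1 - a2)^-1 *: (d2 - d1).
    apply: (@scalerI _ _ (a1 - a2)) => //.
    rewrite scalerA mulfV // scale1r scalerBl -(addrKA d1) [_ + d1]addrC e.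
    by rewrite opprD addrACA subrr addr0.
  rewrite -[_ *: _]addr0; apply: (Acl) => //.
  by rewrite addrC -scaleN1r; apply: (Acl).
pose f w := projT1 (cid (dec w)).
have fP w : exists d, A d /\ w = d + f w *: y by exact: (projT2 (cid (dec w))).
have fE w a d : A d -> w = d + a *: y -> f w = a.
  move=> Ad e; have [d' [Ad' e']] := fP w.
  by apply: (coef_uniq _ _ d' d); rewrite -?e -?e'.
exists f; split.
- move=> a x z; have [dx [Ax ex]] := fP x; have [dz [Az ez]] := fP z.
  apply: (fE _ _ (a *: dx + dz)); first exact: (Acl).
  by rewrite {1}ex {1}ez scalerDr scalerA scalerDl addrACA.
- by move=> x Ex; apply: (fE _ _ x); [exact: EA | rewrite scale0r addr0].
- by apply: (fE _ _ 0) => //; rewrite scale1r add0r.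
Qed.

End LinearFunctionals.

Section Rationality.
Variables (K : fieldType) (V : lmodType K) (C : coalg V).

Lemma Rat_ract c : Defs.Rat setT (ract C) c.
Proof.
exists setT; split; last by split=> // n _; exists (delta C n).
by split=> //; split.
Qed.

Lemma Rat_image (N1 N2 : lmodType K) (M1 : set N1) (M2 : set N2)
    (act1 : N1 -> (V -> K) -> N1) (act2 : N2 -> (V -> K) -> N2) (g : N1 -> N2) :
  linear g -> (forall n, M1 n -> M2 (g n)) ->
  (forall n cs, M1 n -> lin_fun cs -> g (act1 n cs) = act2 (g n) cs) ->
  forall n, Defs.Rat M1 act1 n -> Defs.Rat M2 act2 (g n).
Proof.
move=> lg gM gact n [P [[PM [P0 [Pcl Pact]]] [Prat Pn]]].
pose gL : {linear N1 -> N2} := HB.pack g (GRing.isLinear.Build _ _ _ _ g lg).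
have gsum (I : Type) (r : seq I) (F : I -> N1) :
  g (\sum_(i <- r) F i) = \sum_(i <- r) g (F i) by exact: (linear_sum gL).
exists (g @` P); split; [split; [|split; [|split]] | split]; last by exists n.
- by move=> _ [x Px <-]; apply/gM/PM.
- by exists 0 => //; exact: (linear0 gL).
- by move=> a _ _ [x Px <-] [z Pz <-]; exists (a *: x + z); [exact: Pcl | exact: lg].
- move=> _ cs lcs [x Px <-]; exists (act1 x cs); first exact: Pact.
  exact: gact (PM _ Px) lcs.
- move=> _ [x Px <-]; have [s [sP xs]] := Prat x Px.
  exists [seq (p.1, g p.2) | p <- s]; split.
    by move=> p /List.in_map_iff [q [<- qs]]; exists q.2; [exact: sP |].
  move=> cs lcs; rewrite -(gact _ _ (PM _ Px) lcs) xs // big_map.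
  by rewrite gsum; apply: eq_bigr => p _; exact: (linearZ_LR gL).
Qed.

Lemma Rat_module_map (N : lmodType K) (M : set N) (act : N -> (V -> K) -> N)
    (g : V -> N) :
  linear g -> (forall c, M (g c)) ->
  (forall c cs, lin_fun cs -> g (ract C c cs) = act (g c) cs) ->
  forall c, Defs.Rat M act (g c).
Proof.
move=> lg gM gact c; apply: (Rat_image (M1 := setT)) (Rat_ract c) => // x cs _.
exact: gact.
Qed.

Lemma lin_fun_lact (f cs : V -> K) x : lin_fun f -> f (lact C cs x) = conv C f cs x.
Proof.
move=> lf; rewrite lin_fun_sum //; apply: eq_bigr => p _.
by rewrite lin_funZ // mulrC.
Qed.

Lemma subcomod_lact D cs x : subcomod C D -> lin_fun cs -> D x -> D (lact C cs x).
Proof.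
move=> [sD Dcomod] lcs Dx; apply: contrapT => Dnx.
have [f [lf fD f1]] := separating_functional sD Dnx.
have := Dcomod f cs lf lcs fD x Dx.
by rewrite -/(conv C f cs x) -lin_fun_lact // f1 => /eqP; rewrite oner_eq0.
Qed.

(* Functionals separate points, and [f (lact C cs x) = conv C f cs x] is linear in [x]. *)
Lemma lact_linear cs : lin_fun cs -> linear (lact C cs).
Proof.
move=> lcs a x y; apply/eqP; rewrite -subr_eq0; apply/eqP; apply: contrapT => u0.
have s0 : subspace [set 0 : V] by split=> // b _ _ -> ->; rewrite scaler0 addr0.
have [f [lf _]] := separating_functional s0 u0.
rewrite lin_funB // lf !lin_fun_lact // /conv (delta_lin C lf lcs) subrr.
by move/eqP; rewrite eq_sym oner_eq0.
Qed.

Lemma dualE_act_lin_on D f cs : subcomod C D -> lin_fun cs -> lin_on D f ->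
  lin_on D (dualE_act C D f cs).
Proof.
move=> cD lcs lf a x y Dx Dy; have [[_ Dcl] _] := cD.
rewrite /dualE_act !asboolT ?lact_linear ?lf //; try exact: subcomod_lact.
exact: Dcl.
Qed.

Definition restrict (D : set V) (f : V -> K^o) : V -> K^o :=
  fun x => if `[< D x >] then f x else 0.

Lemma restrict_linear D : linear (restrict D).
Proof.
move=> a f g; apply/funext => x; rewrite /restrict !fctE.
by case: `[< D x >]; rewrite ?scaler0 ?addr0.
Qed.

Lemma restrict_dualE D f : subspace D -> lin_fun f -> dualE D (restrict D f).
Proof.
move=> [_ Dcl] lf; split=> [a x y Dx Dy|x Dnx]; rewrite /restrict.
  by rewrite !asboolT ?lf //; exact: Dcl.
by rewrite asboolF.
Qed.

Lemma restrict_act D f cs : subcomod C D -> lin_fun f -> lin_fun cs ->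
  dualE_act C D (restrict D f) cs = restrict D (dualC_act C f cs).
Proof.
move=> sD lf lcs; apply/funext => x; rewrite /dualE_act /restrict.
have [Dx|Dnx] := pselect (D x); last by rewrite !asboolF.
by rewrite !asboolT ?lin_fun_lact //; exact: subcomod_lact.
Qed.

End Rationality.

Section DirectSumDuals.
Variables (K : fieldType) (V : lmodType K) (J : Type) (E : J -> set V).
Hypothesis subspaceE : forall j, subspace (E j).
Hypothesis dsumE : is_dsum E setT.

Definition lin_on_family (m : J -> V -> K^o) := forall j, lin_on (E j) (m j).

Lemma dsum_fsums x : fsums E x.
Proof. by have [_ /(_ x) [+ _]] := dsumE; apply. Qed.

Lemma sum_lin_on_family_eq0 m (s : seq (J * V)) : lin_on_family m ->
  (forall p, List.In p s -> E p.1 p.2) -> \sum_(p <- s) p.2 = 0 ->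
  \sum_(p <- s) m p.1 p.2 = 0.
Proof.
(* Grouping the summands by index (equality on [J] being decided classically)
   yields a family with distinct indices, to which independence applies. *)
move=> lm sE s0; pose t : seq ({classic J} * V) := s.
pose part i := \sum_(p <- t | p.1 == i) p.2.
have Epart i : E i (part i).
  rewrite /part big_seq_cond; apply: subspace_sum => // p /andP[/InP ps /eqP <-].
  exact: sE.
have part0 i : i \in undup (map fst t) -> part i = 0.
  have [indep _] := dsumE; move=> iu.
  apply: (indep [seq (i, part i) | i <- undup (map fst t)] _ _ _ (i, part i)).
  - by rewrite -map_comp map_id; exact: (uniq_NoDup (T := {classic J}) (undup_uniq _)).
  - by move=> p /List.in_map_iff [j [<- _]]; exact: Epart.
  - by rewrite big_map -(big_undup_fst t (fun _ v => v)).
  - by apply/(InP (T := ({classic J} * V)%type)); exact: (map_f (fun i => (i, part i))).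
rewrite (big_undup_fst t m) big1_seq // => i /andP[_ iu].
have Ep p : (p \in t) && (p.1 == i) -> E i p.2.
  by case/andP=> /InP ps /eqP <-; exact: sE.
rewrite big_seq_cond -(lin_on_sum _ (subspaceE i) (lm i) Ep) -big_seq_cond.
by rewrite -/(part i) part0 // (lin_on0 (subspaceE i) (lm i)).
Qed.

Definition glue (m : J -> V -> K^o) : V -> K^o :=
  fun x => \sum_(p <- projT1 (cid (dsum_fsums x))) m p.1 p.2.

Lemma glue_sum m (s : seq (J * V)) : lin_on_family m ->
  (forall p, List.In p s -> E p.1 p.2) ->
  glue m (\sum_(p <- s) p.2) = \sum_(p <- s) m p.1 p.2.
Proof.
move=> lm sE; rewrite /glue; case: cid => /= t [tE tx].
apply/eqP; rewrite -subr_eq0; apply/eqP.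
have := sum_lin_on_family_eq0 (s := t ++ [seq (p.1, - p.2) | p <- s]) lm.
rewrite !big_cat !big_map /= sumrN -tx subrr.
rewrite (eq_big_In (s := s) (G := fun p => - m p.1 p.2)) => [|p ps]; last first.
  by rewrite -mulN1r -(lin_onZ _ (subspaceE _) (lm _) (sE _ ps)) scaleN1r.
rewrite sumrN => h; apply: h => // p pts.
case: (List.in_app_or _ _ _ pts) => [|/List.in_map_iff [q [<- qs]]]; first exact: tE.
by rewrite /= -scaleN1r; apply: subspaceZ (sE _ qs).
Qed.

Lemma glue_on m j x : lin_on_family m -> E j x -> glue m x = m j x.
Proof.
move=> lm Ex; have := glue_sum (s := [:: (j, x)]) lm.
by rewrite !big_seq1; apply=> p [<-|].
Qed.

Lemma glue_lin_fun m : lin_on_family m -> lin_fun (glue m).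
Proof.
move=> lm a x y.
have [sx [xE ->]] := dsum_fsums x; have [sy [yE ->]] := dsum_fsums y.
pose sax := [seq (p.1, a *: p.2) | p <- sx].
have saxyE p : List.In p (sax ++ sy) -> E p.1 p.2.
  move=> psxy; case: (List.in_app_or _ _ _ psxy) => [|/yE //].
  by case/List.in_map_iff => q [<- qs]; exact: subspaceZ (xE _ qs).
have -> : a *: \sum_(p <- sx) p.2 + \sum_(p <- sy) p.2 = \sum_(p <- sax ++ sy) p.2.
  by rewrite big_cat big_map scaler_sumr.
rewrite !glue_sum // big_cat big_map mulr_sumr; congr (_ + _).
by apply: eq_big_In => p ps; exact: lin_onZ (subspaceE _) (lm _) (xE _ ps).
Qed.

Lemma glue_linear : linear glue.
Proof.
by move=> a m m'; apply/funext => x; rewrite /glue !fctE big_split scaler_sumr.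
Qed.

Lemma lin_fun_dsum_eq f g : lin_fun f -> lin_fun g ->
  (forall j x, E j x -> f x = g x) -> f = g.
Proof.
move=> lf lg fg; apply/funext => x; have [s [sE ->]] := dsum_fsums x.
by rewrite !lin_fun_sum //; apply: eq_big_In => p /sE; exact: fg.
Qed.

End DirectSumDuals.

Section ProductOfDuals.
Variables (K : fieldType) (V : lmodType K) (C : coalg V) (J : Type) (E : J -> set V).
Hypothesis subcomodE : forall j, subcomod C (E j).
Hypothesis dsumE : is_dsum E setT.

Let subspaceE j : subspace (E j) := (subcomodE j).1.

Lemma prodDual_lin_on m : prodDual C E m -> lin_on_family E m.
Proof.
move=> pm j; have [inJ0 outJ0] := pm j; have [/inJ0 []//|/outJ0 ->] := pselect (J0 C E j).
by move=> a x y _ _; rewrite /= mulr0 addr0.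
Qed.

Lemma glue_act m cs : lin_on_family E m -> lin_fun cs ->
  dualC_act C (glue dsumE m) cs = glue dsumE (prodDual_act C E m cs).
Proof.
move=> lm lcs; apply/funext => x; have [s [sE ->]] := dsum_fsums dsumE x.
have lm_act : lin_on_family E (prodDual_act C E m cs).
  by move=> j; apply: dualE_act_lin_on.
rewrite (glue_sum subspaceE) // /dualC_act lin_fun_sum; last first.
  by apply: delta_lin => //; exact: glue_lin_fun.
apply: eq_big_In => p /sE Ep; rewrite -lin_fun_lact; last exact: glue_lin_fun.
rewrite (glue_on subspaceE _ lm (subcomod_lact (subcomodE _) lcs Ep)).
by rewrite /prodDual_act /dualE_act asboolT.
Qed.

Variable psi : V -> (V -> K^o).
Hypothesis psi_linear : linear psi.
Hypothesis psi_inj : injective psi.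
Hypothesis psi_Rat :
  forall f, Defs.Rat (dualC (V:=V)) (dualC_act C) f <-> exists c, psi c = f.
Hypothesis psi_act :
  forall c cs, lin_fun cs -> psi (ract C c cs) = dualC_act C (psi c) cs.

Lemma psi_lin_fun c : lin_fun (psi c).
Proof.
have [P [[PM _] [_ Pc]]] := (psi_Rat (psi c)).2 (ex_intro _ c erefl).
exact: PM.
Qed.

Lemma Rat_restrict_psi j c :
  Defs.Rat (dualE (E j)) (dualE_act C (E j)) (restrict (E j) (psi c)).
Proof.
apply: (Rat_module_map (C := C) (g := restrict (E j) \o psi)) => [a x y|x|x cs lcs] /=.
- by rewrite psi_linear restrict_linear.
- exact/restrict_dualE/psi_lin_fun.
- by rewrite psi_act // restrict_act //; exact: psi_lin_fun.
Qed.

Lemma psi_vanishes_off_J0 j c x : ~ J0 C E j -> E j x -> psi c x = 0.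
Proof.
move=> notJ0 Ex; have : restrict (E j) (psi c) = 0.
  apply: contrapT => nz; apply: notJ0; exists (restrict (E j) (psi c)).
  by split=> //; exact: Rat_restrict_psi.
by move/(congr1 (fun f => f x)); rewrite /restrict asboolT.
Qed.

Definition psi_restrictions c : J -> V -> K^o :=
  fun j => if `[< J0 C E j >] then restrict (E j) (psi c) else 0.

Lemma psi_restrictions_linear : linear psi_restrictions.
Proof.
move=> a x y; apply/funext => j; apply/funext => z; rewrite /psi_restrictions !fctE.
case: `[< J0 C E j >]; last by rewrite scaler0 addr0.
by rewrite psi_linear restrict_linear !fctE.
Qed.

Lemma psi_restrictions_prodDual c : prodDual C E (psi_restrictions c).
Proof.
move=> j; rewrite /psi_restrictions; split=> h; last by rewrite asboolF.
by rewrite asboolT //; exact/restrict_dualE/psi_lin_fun.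
Qed.

Lemma psi_restrictions_act c cs : lin_fun cs ->
  psi_restrictions (ract C c cs) = prodDual_act C E (psi_restrictions c) cs.
Proof.
move=> lcs; apply/funext => j; rewrite /prodDual_act /psi_restrictions.
case: `[< J0 C E j >]; last by apply/funext => x; rewrite /dualE_act; case: ifP.
by rewrite psi_act // restrict_act //; exact: psi_lin_fun.
Qed.

Lemma psi_restrictions_inj : injective psi_restrictions.
Proof.
move=> c c' e; apply: psi_inj.
apply: (lin_fun_dsum_eq dsumE (psi_lin_fun c) (psi_lin_fun c')) => j x Ex.
have [J0j|notJ0] := pselect (J0 C E j); last by rewrite !(psi_vanishes_off_J0 _ notJ0 Ex).
have /(congr1 (fun f => f j x)) := e.
by rewrite /psi_restrictions /restrict !asboolT.
Qed.

Lemma Rat_prodDualP n :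
  Defs.Rat (prodDual C E) (prodDual_act C E) n <-> exists c, psi_restrictions c = n.
Proof.
split=> [Rn|[c <-]]; last first.
  apply: (Rat_module_map (C := C)) => [||x cs lcs].
  - exact: psi_restrictions_linear.
  - exact: psi_restrictions_prodDual.
  - by rewrite psi_restrictions_act.
have [P [[PM _] [_ Pn]]] := Rn; have lm := prodDual_lin_on (PM _ Pn).
have Rglue : Defs.Rat (dualC (V:=V)) (dualC_act C) (glue dsumE n).
  apply: (Rat_image (glue_linear dsumE) _ _ Rn) => [m /prodDual_lin_on|m cs].
    exact: glue_lin_fun.
  by move=> /prodDual_lin_on lm' lcs; rewrite glue_act.
have [c psic] := (psi_Rat _).1 Rglue.
exists c; apply/funext => j; apply/funext => x; rewrite /psi_restrictions.
have [inJ0 outJ0] := PM _ Pn j.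
have [J0j|notJ0] := pselect (J0 C E j); last by rewrite asboolF // outJ0.
rewrite asboolT // /restrict; have [Ex|notEx] := pselect (E j x).
  by rewrite asboolT // psic (glue_on subspaceE _ lm Ex).
by rewrite asboolF //; have [_ ->] := inJ0 J0j.
Qed.

End ProductOfDuals.

Theorem corollary2p2 (K : fieldType) (V : lmodType K) (C : coalg V)
  (J : Type) (T E : J -> set V)
  (HT : forall j, simple_subcomod C (T j))
  (Hsoc : is_dsum T (socle C))
  (HE : forall j, inj_envelope C (T j) (E j))
  (HC : is_dsum E setT)
  (Hiso : iso_to_Rat C (dualC (V:=V)) (dualC_act C)) :
  iso_to_Rat C (prodDual C E) (prodDual_act C E).
Proof.
have subcomodE j : subcomod C (E j) by have [[]] := HE j.
have [psi [psi_linear [psi_inj [psi_Rat psi_act]]]] := Hiso.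
exists (psi_restrictions C E psi); split; [|split; [|split]].
- exact: psi_restrictions_linear.
- exact: psi_restrictions_inj.
- exact: Rat_prodDualP.
- by move=> c cs lcs; rewrite psi_restrictions_act.
Qed.
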